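(* Let $\mathcal K\in\mathbb N^+$ and $\psi\in(0,1/2]$ be such that $\psi\mathcal K$ is a positive integer, and let $\delta\in(0,1)$. Consider independent samples, each uniform among $\mathcal K$ coupon types. With probability at least $1-\delta$, the number of samples needed to collect all but $\psi\mathcal K$ of the coupon types (that is, to see $\mathcal K(1-\psi)$ distinct types) is at most $$\mathcal K\ln\psi^{-1}+\psi^{-1}\ln\delta^{-1}+\sqrt{2\mathcal K\psi^{-1}\ln\psi^{-1}\ln\delta^{-1}}=O\!\left(\mathcal K\ln\psi^{-1}+\psi^{-1}\ln\delta^{-1}\right).$$ *)

From Stdlib Require Import Reals.
From mathcomp Require Import ssreflect ssrfun ssrbool eqtype ssrnat seq choice fintype finfun finset.

Definition distinct_seen (K T : nat) (s : {ffun 'I_T -> 'I_K}) : nat :=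
  #|[set s i | i : 'I_T]|.

(* Probability, under T i.i.d. uniform samples among K types (i.e. the
   uniform distribution on {ffun 'I_T -> 'I_K}), that at least K - m
   distinct types have been seen among the first T samples, i.e. that the
   number of samples needed to collect all but m types is at most T. *)
Definition collect_prob (K T m : nat) : R :=
  (INR #|[set s : {ffun 'I_T -> 'I_K} | (K - m <= distinct_seen K T s)%N]|
   / INR #|{ffun 'I_T -> 'I_K}|)%R.

Definition coupon_bound (K : nat) (psi delta : R) : R :=
  (INR K * ln (/ psi) + / psi * ln (/ delta)
   + sqrt (2 * INR K * / psi * ln (/ psi) * ln (/ delta)))%R.

From Stdlib Require Import Reals Lra.
From mathcomp Require Import ssreflect ssrfun ssrbool eqtype ssrnat seq choice fintype finfun finset.
From mathcomp Require Import bigop order ssralg ssrnum Rstruct zify.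
From Coquelicot Require Import Coquelicot.
Import Order.TTheory GRing.Theory Num.Theory.

(* Let U be the number of types still unseen after T uniform samples among
   K types.  The collection of K - m types fails exactly when U >= m + 1.
   Expanding (1 + t)^U over the subsets J of unseen types gives the exact
   identity  sum_s (1 + t)^U(s) = sum_J t^|J| (K - |J|)^T,  and since
   (K - j)^T <= K^T e^(-jT/K), Markov's inequality bounds the number of
   failing sample sequences by K^T (1 + t p)^K / (1 + t)^(m+1) for any
   p >= e^(-T/K) (the combinatorial part, over an arbitrary ordered ring).
   Choosing q = (m + 1)/K, p = q e^-y and t = (e^y - 1)/(1 - q) turns this
   into a Chernoff bound whose exponent is controlled by two elementary real
   inequalities (log_ratio_bound, sqrt_dominates_log) once
   y = z + sqrt (2 L z) with L = ln (1/psi) and z = ln (1/delta) / m; the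
   hypothesis on T gives y - ln q <= T/K.  The degenerate case K = m + 1
   (i.e. K = 2) is trivial since a single sample already shows a type. *)

Section SubsetExpansion.
Local Open Scope ring_scope.
Variables (R : comNzRingType) (I : finType).

Lemma expr_card_subsets (A : {set I}) (x : R) :
  (1 + x) ^+ #|A| = \sum_(J : {set I} | J \subset A) x ^+ #|J|.
Proof.
have -> : (1 + x) ^+ #|A| = \prod_(i : I) ((i \in A)%:R * x + 1).
  rewrite (bigID (mem A)) /= [X in _ * X]big1 ?mulr1; last first.
    by move=> i /negbTE ->; rewrite mul0r add0r.
  by rewrite -prodr_const; apply: eq_bigr => i ->; rewrite mul1r addrC.
rewrite bigA_distr [RHS]big_mkcond /=; apply: eq_bigr => J _.
rewrite -big_mkcond /= big_split /= prodr_const.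
case: (boolP (J \subset A)) => [sJA | /subsetPn [i iJ iA]].
  by rewrite big1 ?mul1r // => i /(subsetP sJA) ->.
by rewrite (bigD1 i) //= (negbTE iA) !mul0r.
Qed.

End SubsetExpansion.

Section Occupancy.
Local Open Scope ring_scope.
Variables (K T : nat).
Implicit Type s : {ffun 'I_T -> 'I_K}.

Definition seen s : {set 'I_K} := [set s i | i : 'I_T].
Definition unseen s : {set 'I_K} := ~: seen s.

Definition failures (m : nat) : {set {ffun 'I_T -> 'I_K}} :=
  [set s | ~~ (K - m <= distinct_seen K T s)%N].

Lemma failures_unseen (m : nat) : failures m = [set s | (m.+1 <= #|unseen s|)%N].
Proof.
apply/setP => s; rewrite !inE /unseen /distinct_seen -/(seen s).
have := cardsC (seen s); rewrite card_ord.
move: #|seen s| #|~: seen s| => a b; lia.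
Qed.

(* When at most one type has to be collected, T >= 1 samples never fail:
   the first sample already shows a type. *)
Lemma failures_empty (m : nat) : (0 < T)%N -> (K <= m.+1)%N -> failures m = set0.
Proof.
move=> T0 Km; apply/setP => s; rewrite !inE; apply/negbTE; rewrite negbK /distinct_seen.
apply: leq_trans (_ : 0 < _)%N; first by lia.
by rewrite card_gt0; apply/set0Pn; exists (s (Ordinal T0)); apply: imset_f.
Qed.

(* The samples avoiding a fixed set J of types are the functions into ~: J. *)
Lemma card_avoiding (J : {set 'I_K}) :
  #|[set s | J \subset unseen s]| = ((K - #|J|) ^ T)%N.
Proof.
have -> : [set s | J \subset unseen s] = [set s in ffun_on (mem (~: J))].
  apply/setP => s; rewrite !inE /unseen -disjoints_subset.
  apply/idP/ffun_onP => [dis i | onJ].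
    by rewrite inE (disjointFl dis) //; apply: imset_f.
  apply/pred0P => j /=; apply/negbTE/andP => -[jJ /imsetP [i _ ej]].
  by have := onJ i; rewrite inE -ej jJ.
rewrite cardsE card_ffun_on card_ord; congr (_ ^ _)%N.
change (#|~: J| = K - #|J|)%N.
by have := cardsC J; rewrite card_ord; lia.
Qed.

(* Exact formula for the generating function of the number of unseen types:
   expand (1 + x)^#unseen over subsets J of unseen types and count, for each
   J, the samples avoiding J. *)
Lemma sum_unseen_moment (R : comNzRingType) (x : R) :
  \sum_s (1 + x) ^+ #|unseen s| = \sum_(J : {set 'I_K}) x ^+ #|J| *+ (K - #|J|) ^ T.
Proof.
under eq_bigr => s _ do rewrite expr_card_subsets.
rewrite (exchange_big_dep predT) //=; apply: eq_bigr => J _.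
by rewrite sumr_const -card_avoiding cardsE.
Qed.

(* Markov-type tail bound for the number of unseen types: if every set of j
   types is avoided by at most a fraction p^j of the samples, then for t >= 0
   at most K^T (1 + t p)^K / (1 + t)^a samples miss a or more types. *)
Lemma unseen_tail_bound (R : numDomainType) (a : nat) (t p : R) :
  0 <= t -> 0 <= p ->
  (forall j, (j <= K)%N -> (K - j)%:R ^+ T <= K%:R ^+ T * p ^+ j) ->
  #|[set s | (a <= #|unseen s|)%N]|%:R * (1 + t) ^+ a <= K%:R ^+ T * (1 + t * p) ^+ K.
Proof.
move=> t0 p0 avoid.
have t1 : 1 <= 1 + t by rewrite lerDl.
apply: (@le_trans _ _ (\sum_(s in [set s | (a <= #|unseen s|)%N]) (1 + t) ^+ #|unseen s|)).
  rewrite mulr_natl -sumr_const; apply: ler_sum => s; rewrite inE.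
  exact: ler_weXn2l.
apply: (@le_trans _ _ (\sum_s (1 + t) ^+ #|unseen s|)).
  rewrite [X in _ <= X](bigID (mem [set s | (a <= #|unseen s|)%N])) /= lerDl.
  by apply: sumr_ge0 => s _; rewrite exprn_ge0 // (le_trans ler01).
rewrite sum_unseen_moment -[X in _ * (1 + _) ^+ X]card_ord -cardsT expr_card_subsets.
under [X in _ <= _ * X]eq_bigl do rewrite subsetT.
rewrite big_distrr /=; apply: ler_sum => J _.
rewrite exprMn mulrCA -mulr_natr natrX; apply: ler_wpM2l; first exact: exprn_ge0.
by apply: avoid; have := max_card (mem J); rewrite card_ord.
Qed.

End Occupancy.

Section RealInequalities.
Local Open Scope R_scope.

Lemma le_of_derive_ge0 (f df : R -> R) (a b : R) : a <= b ->
  (forall x, a <= x <= b -> is_derive f x (df x)) ->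
  (forall x, a <= x <= b -> 0 <= df x) -> f a <= f b.
Proof.
move=> ab f' df0.
have [c [c_ab fE]] : exists c, a <= c <= b /\ f b - f a = df c * (b - a).
  have [x | x | c [+ fE]] := MVT_gen f a b df; rewrite Rmin_left ?Rmax_right //.
  - by move=> x_ab; apply: f'; lra.
  - move=> x_ab; apply/continuity_pt_filterlim/ex_derive_continuous.
    by exists (df x); apply: f'.
  - by move=> c_ab; exists c.
suff : 0 <= f b - f a by lra.
by rewrite fE; apply: Rmult_le_pos; [apply: df0 | lra].
Qed.

Lemma exp_le_exp (x y : R) : x <= y -> exp x <= exp y.
Proof. by case/Rle_lt_or_eq_dec => [/exp_increasing/Rlt_le | ->]; [| apply: Rle_refl]. Qed.

Lemma ln_le_inv (a b : R) : 0 < a -> 0 < b -> ln a <= ln b -> a <= b.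
Proof. by move=> a0 b0 /exp_le_exp; rewrite !exp_ln. Qed.

Lemma exp_pow (x : R) (n : nat) : exp x ^ n = exp (INR n * x).
Proof.
elim: n => [|n IH]; first by rewrite /= Rmult_0_l exp_0.
by rewrite S_INR /= IH -exp_plus; congr exp; ring.
Qed.

Lemma exp_ge_taylor2 (x : R) : 0 <= x -> 1 + x + x ^ 2 / 2 <= exp x.
Proof.
move=> x0.
pose g u := exp u - (1 + u + u ^ 2 / 2).
suff : g 0 <= g x by rewrite /g exp_0; lra.
apply: (le_of_derive_ge0 g (fun u => exp u - (1 + u))) => // [u _ | u _].
  by rewrite /g; auto_derive => //; field.
by have := exp_ineq1_le u; lra.
Qed.

Lemma ln_ge_1_inv (x : R) : 0 < x -> 1 - / x <= ln x.
Proof.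
move=> x0; have xi := Rinv_0_lt_compat x x0.
have : ln (/ x) <= / x - 1.
  rewrite -[X in _ <= X]ln_exp; apply: ln_le => //; have := exp_ineq1_le (/ x - 1); lra.
by rewrite ln_Rinv //; lra.
Qed.

Lemma one_sub_le_ln_inv (x : R) : 0 < x -> 1 - x <= ln (/ x).
Proof. by move=> x0; have := ln_ge_1_inv (/ x) (Rinv_0_lt_compat _ x0); rewrite Rinv_inv. Qed.

(* Both sides vanish at y = 0 and the derivative of the difference is
   q c (1 - e^-y - y e^-y) / ((1 - q e^-y) (c + y)) >= 0. *)
Lemma log_ratio_bound (q y : R) : 0 < q < 1 -> 0 <= y ->
  (1 - q) * ln ((1 - q * exp (- y)) / (1 - q)) <= q * (1 - q) * ln (1 + y / (1 - q)).
Proof.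
move=> [q0 q1] y0; set c := 1 - q.
have c0 : 0 < c by rewrite /c; lra.
have ci := Rinv_0_lt_compat c c0.
pose g u := q * c * ln (1 + u / c) - c * ln ((1 - q * exp (- u)) / c).
suff : g 0 <= g y.
  by rewrite /g Ropp_0 exp_0 Rmult_1_r /Rdiv Rmult_0_l Rplus_0_r Rinv_r ?ln_1; lra.
have e_bounds u : 0 <= u -> 0 < exp (- u) <= 1.
  by move=> u0; split; [apply: exp_pos | rewrite -exp_0; apply: exp_le_exp; lra].
apply: (le_of_derive_ge0 g (fun u => q * c * (1 - exp (- u) - exp (- u) * u)
                          / ((1 - q * exp (- u)) * (c + u)))) => // u [u0 _];
  have [e0 e1] := e_bounds u u0; have h1 : 0 < 1 - q * exp (- u) by nra.
- rewrite /g; auto_derive.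
    have : 0 <= u * / c by apply: Rmult_le_pos; lra.
    by split; [lra | split => //; apply: Rmult_lt_0_compat; lra].
  by rewrite /c; field; repeat split; apply: Rgt_not_eq; lra.
- have e_inv : exp (- u) * exp u = 1 by rewrite -exp_plus Rplus_opp_l exp_0.
  have : 0 <= 1 - exp (- u) - exp (- u) * u by have := exp_ineq1_le u; nra.
  move=> h2; apply: Rmult_le_pos; first by apply: Rmult_le_pos; nra.
  by apply/Rlt_le/Rinv_0_lt_compat; nra.
Qed.

(* For 0 < c <= L and z >= 0, with r = sqrt (2 L z):  c ln (1 + (z + r) / c) <= r,
   since 1 + (z + r) / c <= 1 + r / c + (r / c)^2 / 2 <= exp (r / c). *)
Lemma sqrt_dominates_log (c L z : R) : 0 < c -> c <= L -> 0 <= z ->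
  c * ln (1 + (z + sqrt (2 * L * z)) / c) <= sqrt (2 * L * z).
Proof.
move=> c0 cL z0; set r := sqrt (2 * L * z).
have r0 : 0 <= r by apply: sqrt_pos.
have r2 : r * r = 2 * L * z by apply: sqrt_sqrt; nra.
have rc0 : 0 <= r / c by apply: Rdiv_le_0_compat.
have taylor : 1 + (z + r) / c <= 1 + r / c + (r / c) ^ 2 / 2.
  have gap : (r / c) ^ 2 / 2 - z / c = (L - c) * z / (c * c).
    by rewrite /= -Rmult_assoc; field [r2]; apply: Rgt_not_eq.
  have : 0 <= (L - c) * z / (c * c) by apply: Rdiv_le_0_compat; nra.
  by move: gap; rewrite /Rdiv; lra.
have : ln (1 + (z + r) / c) <= r / c.
  rewrite -[X in _ <= X]ln_exp; apply: ln_le; last exact: Rle_trans taylor (exp_ge_taylor2 _ rc0).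
  have h : 0 <= (z + r) / c by apply: Rdiv_le_0_compat; lra.
  lra.
move=> /(Rmult_le_compat_l c _ _ (Rlt_le _ _ c0)).
by have -> : c * (r / c) = r by field; apply: Rgt_not_eq.
Qed.

Lemma exponent_choice (q L z y : R) : 0 < q < 1 -> 1 - q <= L -> 0 <= z ->
  y = z + sqrt (2 * L * z) ->
  q * z <= q * y - (1 - q) * ln ((1 - q * exp (- y)) / (1 - q)).
Proof.
move=> [q0 q1] qL z0 yE.
have y0 : 0 <= y by rewrite yE; have := sqrt_pos (2 * L * z); lra.
have ratio := log_ratio_bound q y (conj q0 q1) y0.
have dominate := sqrt_dominates_log (1 - q) L z ltac:(lra) qL z0.
rewrite -yE in dominate.
have : q * ((1 - q) * ln (1 + y / (1 - q))) <= q * (y - z).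
  by apply: Rmult_le_compat_l; lra.
lra.
Qed.

End RealInequalities.

Section CouponTail.
Local Open Scope R_scope.

Lemma failures_tail_bound (K T m : nat) (t p : R) : 0 <= t -> 0 <= p ->
  (forall j, (j <= K)%N -> INR (K - j) ^ T <= INR K ^ T * p ^ j) ->
  INR #|failures K T m| * (1 + t) ^ m.+1 <= INR K ^ T * (1 + t * p) ^ K.
Proof.
move=> t0 p0 avoid; apply/RleP; rewrite failures_unseen !RpowE !INRE.
apply: unseen_tail_bound; try exact/RleP.
by move=> j /avoid; rewrite !RpowE !INRE => /RleP.
Qed.

(* A set of j types is avoided by T samples with probability
   (1 - j/K)^T <= exp (- T / K)^j. *)
Lemma avoid_prob_bound (K T j : nat) (p : R) : (0 < K)%N -> (j <= K)%N ->
  exp (- (INR T / INR K)) <= p -> INR (K - j) ^ T <= INR K ^ T * p ^ j.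
Proof.
move=> K0 jK Tp; have K0' : 0 < INR K by apply: lt_0_INR; apply/ssrnat.ltP.
have jK' : INR j <= INR K by apply/le_INR/ssrnat.leP.
pose a := exp (- / INR K).
have a0 : 0 <= a by apply/Rlt_le/exp_pos.
have Kj : INR (K - j) <= INR K * a ^ j.
  rewrite minus_INR; last exact/ssrnat.leP.
  rewrite /a exp_pow; have := exp_ineq1_le (INR j * - / INR K).
  have -> : INR K - INR j = INR K * (1 + INR j * - / INR K) by field; lra.
  by move=> h; apply: Rmult_le_compat_l; lra.
have aTp : a ^ T <= p.
  by rewrite /a exp_pow; apply: Rle_trans Tp; apply/exp_le_exp/Req_le; field; lra.
apply: Rle_trans (pow_incr _ _ T (conj (pos_INR _) Kj)) _.
rewrite Rpow_mult_distr -pow_mult Nat.mul_comm pow_mult.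
apply: Rmult_le_compat_l; first by apply: pow_le; lra.
by apply: pow_incr; split => //; apply: pow_le.
Qed.

Lemma collect_prob_of_failures (K T m : nat) (delta : R) : (0 < K)%N ->
  INR #|failures K T m| <= delta * INR K ^ T -> 1 - delta <= collect_prob K T m.
Proof.
move=> K0; rewrite /collect_prob.
set S := [set s | _].
have -> : INR #|failures K T m| = INR #|~: S| by congr INR; apply: eq_card => s; rewrite !inE.
have all_seqs : INR #|{ffun 'I_T -> 'I_K}| = INR K ^ T.
  by rewrite card_ffun !card_ord RpowE !INRE natrX.
have KT0 : 0 < INR K ^ T by apply/pow_lt/lt_0_INR/ssrnat.ltP.
have total : INR #|S| + INR #|~: S| = INR K ^ T.
  by rewrite -plus_INR -all_seqs; congr INR; apply: cardsC.
move=> hF; rewrite all_seqs; apply: (Rmult_le_reg_r (INR K ^ T)) => //.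
by rewrite /Rdiv Rmult_assoc Rinv_l; [lra | apply: Rgt_not_eq].
Qed.

(* Write a = m + 1 = q K for the number of missed types
   that makes the collection fail, and take p = q e^-y >= e^(-T/K) and
   t = (e^y - 1) / (1 - q) in failures_tail_bound, so that 1 + t p = u and
   1 + t = e^y u with u = (1 - q e^-y) / (1 - q). The failure count is then
   at most K^T u^K / (e^y u)^a, which is at most delta K^T exactly when
   ln (1/delta) <= K (q y - (1 - q) ln u). *)
Lemma failures_bound (K T m : nat) (q y delta : R) :
  (m.+1 < K)%N -> INR K * q = INR m.+1 -> 0 <= y ->
  y - ln q <= INR T / INR K -> 0 < delta ->
  ln (/ delta) <= INR K * (q * y - (1 - q) * ln ((1 - q * exp (- y)) / (1 - q))) ->
  INR #|failures K T m| <= delta * INR K ^ T.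
Proof.
move=> mK Kq y0 yT d0 exponent.
have K0 : (0 < K)%N by apply: leq_ltn_trans mK.
have K0' : 0 < INR K by apply/lt_0_INR/ssrnat.ltP.
have mK' : INR m.+1 < INR K by apply/lt_INR/ssrnat.ltP.
have q0 : 0 < q by apply: (Rmult_lt_reg_l (INR K)); rewrite ?Kq; [| have := pos_INR m; rewrite S_INR]; lra.
have q1 : q < 1 by apply: (Rmult_lt_reg_l (INR K)); lra.
have ey1 : 1 <= exp y by rewrite -exp_0; apply: exp_le_exp.
have eyV : exp (- y) = / exp y by apply: exp_Ropp.
set p := q * exp (- y) in exponent *; set t := (exp y - 1) / (1 - q).
set u := (1 - p) / (1 - q) in exponent *.
have p0 : 0 <= p by apply/Rlt_le/Rmult_lt_0_compat => //; apply: exp_pos.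
have t0 : 0 <= t by apply: Rdiv_le_0_compat; lra.
have pu0 : 0 < 1 - p.
  rewrite /p eyV; have : / exp y <= 1 by rewrite -Rinv_1; apply: Rinv_le_contravar; lra.
  have := Rinv_0_lt_compat _ (exp_pos y); nra.
have u0 : 0 < u by apply: Rdiv_lt_0_compat; lra.
have e1 : 1 + t * p = u by rewrite /t /u /p eyV; field; split; apply: Rgt_not_eq; lra.
have e2 : 1 + t = exp y * u by rewrite /t /u /p eyV; field; split; apply: Rgt_not_eq; lra.
have Hp : exp (- (INR T / INR K)) <= p.
  by rewrite /p -(exp_ln q) // -exp_plus; apply: exp_le_exp; lra.
clearbody t u.
have tail := failures_tail_bound K T m t p t0 p0 (fun j jK => avoid_prob_bound K T j p K0 jK Hp).
rewrite e1 e2 in tail.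
have eyu0 : 0 < exp y * u by apply: Rmult_lt_0_compat => //; apply: exp_pos.
have ratio : u ^ K <= delta * (exp y * u) ^ m.+1.
  apply: ln_le_inv; [exact: pow_lt | by apply: Rmult_lt_0_compat => //; apply: pow_lt |].
  rewrite ln_pow // ln_mult ?ln_pow ?ln_mult ?ln_exp //; try exact: exp_pos; last exact: pow_lt.
  by rewrite -Kq; move: exponent; rewrite ln_Rinv //; lra.
have KT0 : 0 <= INR K ^ T by apply: pow_le; lra.
apply: (Rmult_le_reg_r ((exp y * u) ^ m.+1)); first exact: pow_lt.
apply: Rle_trans tail _; rewrite (Rmult_comm delta) Rmult_assoc; exact: Rmult_le_compat_l.
Qed.

Lemma coupon_bound_scaled (K m : nat) (psi delta : R) :
  (0 < m)%N -> psi * INR K = INR m ->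
  coupon_bound K psi delta = INR K * (ln (/ psi) + (ln (/ delta) / INR m
                             + sqrt (2 * ln (/ psi) * (ln (/ delta) / INR m)))).
Proof.
move=> m0 psiK; have m0' : 0 < INR m by apply/lt_0_INR/ssrnat.ltP.
have psi0 : psi <> 0 by move=> psi0; move: psiK; rewrite psi0; lra.
have K0 : 0 <= INR K := pos_INR K.
have psiV : / psi = INR K / INR m by rewrite -psiK; field; split => // K0'; move: psiK; rewrite K0'; lra.
rewrite /coupon_bound; set L := ln (/ psi); rewrite psiV.
have -> : 2 * INR K * (INR K / INR m) * L * ln (/ delta) =
          (INR K * INR K) * (2 * L * (ln (/ delta) / INR m)).
  by field; apply: Rgt_not_eq.
rewrite sqrt_mult_alt; last exact: Rmult_le_pos.
rewrite sqrt_square //; field; exact: Rgt_not_eq.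
Qed.

(* T just below the bound suffices for the choice q = (m + 1) / K: since
   K ln ((m + 1) / m) >= 1, the rounding loss is absorbed, and
   y - ln q <= T / K whenever K (ln (1/psi) + y) < T + 1. *)
Lemma enough_samples (K m T : nat) (psi y : R) : (0 < m)%N -> (m < K)%N ->
  psi * INR K = INR m -> INR K * (ln (/ psi) + y) < INR T + 1 ->
  y - ln (INR m.+1 / INR K) <= INR T / INR K.
Proof.
move=> m0 mK psiK T_large.
have m0' : 0 < INR m by apply/lt_0_INR/ssrnat.ltP.
have mK' : INR m.+1 <= INR K by apply/le_INR/ssrnat.leP.
have K0 : 0 < INR K by rewrite S_INR in mK'; lra.
have m1 : 0 < INR m.+1 by rewrite S_INR; lra.
have ratio_gap : 1 <= INR K * ln (INR m.+1 / INR m).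
  have := ln_ge_1_inv (INR m.+1 / INR m) (Rdiv_lt_0_compat _ _ m1 m0').
  have -> : 1 - / (INR m.+1 / INR m) = / INR m.+1 by rewrite S_INR; field; lra.
  move=> h; apply: Rle_trans (Rmult_le_compat_l _ _ _ (Rlt_le _ _ K0) h).
  by rewrite -(Rinv_r (INR m.+1)); [apply: Rmult_le_compat_r; [apply/Rlt_le/Rinv_0_lt_compat|] | lra].
have split_ln : ln (INR m.+1 / INR m) = ln (/ psi) + ln (INR m.+1 / INR K).
  rewrite -ln_mult; [congr ln | | exact: Rdiv_lt_0_compat].
    by rewrite -psiK; field; split; [lra | move=> psi0; move: psiK; rewrite psi0; lra].
  by apply: Rinv_0_lt_compat; apply: (Rmult_lt_reg_r (INR K)); rewrite ?psiK; lra.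
rewrite split_ln in ratio_gap; apply: (Rmult_le_reg_r (INR K)) => //.
by rewrite /Rdiv Rmult_assoc Rinv_l; lra.
Qed.

Lemma failures_bound_chosen (K m T : nat) (psi delta z : R) :
  (0 < m)%N -> (m.+1 < K)%N -> 0 < psi -> psi * INR K = INR m -> 0 < delta ->
  0 <= z -> ln (/ delta) = INR m * z ->
  INR K * (ln (/ psi) + (z + sqrt (2 * ln (/ psi) * z))) < INR T + 1 ->
  INR #|failures K T m| <= delta * INR K ^ T.
Proof.
move=> m0 mK psi0 psiK d0 z0 deltaE T_large.
set L := ln (/ psi) in T_large; set y := z + sqrt (2 * L * z) in T_large.
have psiL : 1 - psi <= L := one_sub_le_ln_inv psi psi0.
have y0 : 0 <= y by have := sqrt_pos (2 * L * z); rewrite /y; lra.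
have K0 : 0 < INR K by apply/lt_0_INR/ssrnat.ltP/(leq_ltn_trans _ mK).
have mK' : INR m.+1 < INR K by apply/lt_INR/ssrnat.ltP.
have m1 : 0 < INR m.+1 by apply/lt_0_INR/Nat.lt_0_succ.
pose q := INR m.+1 / INR K.
have Kq : INR K * q = INR m.+1 by rewrite /q; field; lra.
have q_psi : psi <= q.
  by apply: (Rmult_le_reg_l (INR K)); rewrite // Kq Rmult_comm psiK S_INR; lra.
have q01 : 0 < q < 1 by split; apply: (Rmult_lt_reg_l (INR K)); rewrite // Kq; lra.
apply: (failures_bound K T m q y) => //.
  by apply: (enough_samples K m T psi) => //; exact: ltnW.
have := exponent_choice q L z y q01 ltac:(lra) z0 erefl.
by rewrite deltaE; rewrite S_INR in Kq; nra.
Qed.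

(* The bound is at least K ln (1/psi) >= K (1 - psi) = K - m >= m >= 1 when
   psi <= 1/2, so a T just below it is positive. *)
Lemma samples_positive (K m T : nat) (psi z : R) :
  (0 < m)%N -> 0 < psi -> psi <= 1 / 2 -> psi * INR K = INR m -> 0 <= z ->
  INR K * (ln (/ psi) + (z + sqrt (2 * ln (/ psi) * z))) < INR T + 1 -> (0 < T)%N.
Proof.
move=> m0 psi0 psi_half psiK z0 T_large; apply/ssrnat.ltP/INR_lt => /=.
set L := ln (/ psi) in T_large.
have psiL : 1 - psi <= L := one_sub_le_ln_inv psi psi0.
have s0 := sqrt_pos (2 * L * z).
have : INR K * (1 - psi) <= INR K * (L + (z + sqrt (2 * L * z))).
  by apply: Rmult_le_compat_l; [apply: pos_INR | lra].
have : INR m <= INR K / 2 by rewrite -psiK; have := pos_INR K; nra.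
have : 1 <= INR m by apply/(le_INR 1)/ssrnat.leP.
lra.
Qed.

End CouponTail.

(* ssralg rebinds the %R delimiter to ring_scope; the statement uses it for
   the real numbers. *)
Delimit Scope R_scope with R.

Theorem mainTheorem8 (K m T : nat) (psi delta : R) :
  (0 < K)%N ->
  (0 < psi)%R -> (psi <= 1 / 2)%R ->
  (0 < m)%N -> (psi * INR K)%R = INR m ->
  (0 < delta)%R -> (delta < 1)%R ->
  (INR T <= coupon_bound K psi delta < INR T + 1)%R ->
  (1 - delta <= collect_prob K T m)%R.
Proof.
move=> K0 psi0 psi_half m0 psiK d0 d1 [_ T_large].
apply: collect_prob_of_failures => //.
rewrite (coupon_bound_scaled K m psi delta m0 psiK) in T_large.
have m0' : 0 < INR m by apply/lt_0_INR/ssrnat.ltP.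
have z0 : 0 <= ln (/ delta) / INR m.
  apply: Rdiv_le_0_compat => //.
  by rewrite ln_Rinv //; have := ln_increasing _ _ d0 d1; rewrite ln_1; lra.
case: (ltnP m.+1 K) => [mK | Km].
  by apply: (failures_bound_chosen K m T psi delta (ln (/ delta) / INR m)) => //; field; lra.
(* Degenerate case K = m + 1: a single sample suffices. *)
have T0 := samples_positive K m T psi _ m0 psi0 psi_half psiK z0 T_large.
by rewrite failures_empty // cards0 /=; apply: Rmult_le_pos; [lra | exact: pow_le (pos_INR K)].
Qed.
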